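(* Let $d\ge3$, $h\ge1$. The group $G(d,h)$ contains a subgroup isomorphic to $(\mathbb{Z}/d\mathbb{Z})^{(d-1)^h}$.
   Context: Let $\mathcal{T}(d,h)$ be the rooted tree in which the root $0$ has $d$ children, every vertex at distance $1,\dots,h-1$ from the root has $d-1$ children, and the vertices at distance $h$ are leaves. Let $V$ be its vertex set, $A$ its adjacency matrix, $\Delta := dI-A$, and $\Lambda\subset\mathbb{Z}^V$ the lattice spanned by the rows of $\Delta$. Then $G(d,h):=\mathbb{Z}^V/\Lambda$. *)

From mathcomp Require Import all_boot all_order all_algebra.
Set Implicit Arguments. Unset Strict Implicit. Unset Printing Implicit Defensive.
Import GRing.Theory.
Local Open Scope ring_scope.

(* Vertices of T(d,h): a vertex is encoded by its depth k (0 <= k <= h) and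
   the path of child choices from the root (positions 0..k-1); the root has
   d possible children (choice < d), every other internal vertex has d-1
   possible children (choice < d-1). Positions >= k are normalised to 0. *)
Definition valid_vertex (d h : nat) (x : 'I_h.+1 * {ffun 'I_h -> 'I_d}) : bool :=
  [forall i : 'I_h,
     if (i < x.1)%N then (x.2 i < (if i == 0%N :> nat then d else d.-1))%N
     else (x.2 i == 0%N :> nat)].

Definition tvertex (d h : nat) : finType :=
  {x : 'I_h.+1 * {ffun 'I_h -> 'I_d} | @valid_vertex d h x}.

Definition depth d h (v : tvertex d h) : nat := (val v).1.
Definition tpath d h (v : tvertex d h) : {ffun 'I_h -> 'I_d} := (val v).2.

Definition parent d h (u v : tvertex d h) : bool :=
  (depth v == (depth u).+1) &&
  [forall i : 'I_h, (i < depth u)%N ==> (tpath u i == tpath v i)].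

Definition tadj d h (u v : tvertex d h) : bool := parent u v || parent v u.

Definition ZV d h := {ffun tvertex d h -> int}.

Definition Delta_row d h (v : tvertex d h) : ZV d h :=
  [ffun w => (d * (v == w))%:Z - (tadj v w : nat)%:Z].

Definition in_lattice d h (x : ZV d h) : Prop :=
  exists c : {ffun tvertex d h -> int},
    x = [ffun w => \sum_(v : tvertex d h) c v * Delta_row v w].

(* "G(d,h) = Z^V/Lambda contains a subgroup isomorphic to the abelian group H":
   there is an injective group homomorphism H -> Z^V/Lambda, described by a
   lift phi : H -> Z^V (additive modulo Lambda, with trivial kernel mod Lambda). *)
Definition embeds_in_G (H : zmodType) d h : Prop :=
  exists phi : H -> ZV d h,
    (forall a b : H, in_lattice (phi (a + b) - phi a - phi b)) /\
    (forall a : H, in_lattice (phi a) -> a = 0).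

From mathcomp Require Import all_boot all_order all_algebra.
From mathcomp Require Import zify.
Set Implicit Arguments. Unset Strict Implicit. Unset Printing Implicit Defensive.
Import Order.TTheory GRing.Theory Num.Theory.

(* For a vertex u let E_u and O_u be the indicator vectors of the descendants
   of u at even and at odd distance from u.  When the leaves lie at even
   distance below u, a vertex w has d * O_u(w) neighbours in E_u, plus one if
   w is the parent p of u, so E_u * Delta = d (E_u - O_u) - e_p.  Subtracting
   the same identity for the first child u' of p cancels e_p: the vector
   x_u = (E_u - O_u) - (E_u' - O_u') satisfies d x_u = (E_u - E_u') * Delta.
   Take u over the root (if h is even) and the non-first children at depths
   of the parity of h; there are (d-1)^h of them.  Since Delta is nonsingular,
   sum_u a_u x_u in Lambda forces sum_u a_u (E_u - E_u') = 0 mod d, and this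
   matrix is unitriangular once vertices are ordered by depth, so every a_u
   is divisible by d.  Hence the x_u generate a copy of (Z/dZ)^((d-1)^h). *)

Section Tree.

Variables dd hh : nat.
Local Notation d := dd.+3.
Local Notation h := hh.+1.
Local Notation V := (tvertex d h).

Definition branching (i : nat) : nat := if i == 0 then d else d.-1.

Lemma branching_le i : branching i <= d.
Proof. by rewrite /branching; case: ifP. Qed.

Lemma branching_gt0 i : 0 < branching i.
Proof. by rewrite /branching; case: ifP. Qed.

Definition coord (v : V) (i : nat) : nat :=
  if i < h then nat_of_ord (tpath v (inord i)) else 0.

Lemma depth_leh (v : V) : depth v <= h.
Proof. by rewrite /depth -ltnS ltn_ord. Qed.

Lemma coordE (v : V) (i : 'I_h) : coord v i = tpath v i.
Proof. by rewrite /coord ltn_ord inord_val. Qed.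

Lemma coord_valid (v : V) (i : 'I_h) :
  if i < depth v then coord v i < branching i else coord v i == 0.
Proof. by have /forallP/(_ i) := valP v; rewrite coordE. Qed.

Lemma coord_lt (v : V) i : i < depth v -> coord v i < branching i.
Proof.
move=> lt_i; have lt_ih : i < h by apply: leq_trans lt_i (depth_leh v).
by have := coord_valid v (Ordinal lt_ih); rewrite /= lt_i.
Qed.

Lemma coord_ge (v : V) i : depth v <= i -> coord v i = 0.
Proof.
move=> le_i; case: (ltnP i h) => [lt_ih|le_hi]; last by rewrite /coord ltnNge le_hi.
by have := coord_valid v (Ordinal lt_ih); rewrite /= ltnNge le_i => /eqP.
Qed.

Lemma vertex_ext (u v : V) : depth u = depth v ->
  (forall i, i < depth u -> coord u i = coord v i) -> u = v.
Proof.
move=> eq_depth eq_coord; apply/val_inj/injective_projections.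
  exact: val_inj.
apply/ffunP => i; apply: val_inj; rewrite -[LHS]coordE -[RHS]coordE.
case: (ltnP i (depth u)) => [|le_i]; first exact: eq_coord.
by rewrite !coord_ge // -eq_depth.
Qed.

Lemma root_valid : @valid_vertex d h (ord0, [ffun _ => ord0]).
Proof. by apply/forallP => i; rewrite ffunE. Qed.

Definition root : V := Sub (ord0, [ffun _ => ord0]) root_valid.

Lemma depth0_root (v : V) : depth v = 0 -> v = root.
Proof. by move=> v0; apply: vertex_ext => // i; rewrite v0. Qed.

Definition mkvertex (k : nat) (p : nat -> nat) : V :=
  insubd root (inord k, [ffun i : 'I_h => if i < k then inord (p i) else ord0]).

Lemma mkvertexP k p : k <= h -> (forall i, i < k -> p i < branching i) ->
  depth (mkvertex k p) = k /\ forall i, coord (mkvertex k p) i = if i < k then p i else 0.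
Proof.
move=> le_kh lt_p.
have lt_pd i : i < k -> p i < d by move=> /lt_p /leq_trans; apply; apply: branching_le.
have valid : @valid_vertex d h (inord k, [ffun i : 'I_h => if i < k then inord (p i) else ord0]).
  apply/forallP => i /=; rewrite inordK ?ltnS // ffunE.
  by case: ifP => lt_ik; rewrite lt_ik // inordK ?lt_p ?lt_pd.
have eq_val := insubdK root valid.
split; first by rewrite /depth eq_val /= inordK ?ltnS.
move=> i; rewrite /coord /tpath eq_val /= ffunE.
case: ifP => lt_ih; last by case: ifP => // lt_ik; move: (leq_trans lt_ik le_kh); rewrite lt_ih.
by rewrite inordK //; case: ifP => // lt_ik; rewrite inordK ?lt_pd.
Qed.

Definition ancestor (v : V) (k : nat) : V := mkvertex (minn k (depth v)) (coord v).

Lemma ancestorP (v : V) k : depth (ancestor v k) = minn k (depth v) /\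
  forall i, coord (ancestor v k) i = if i < minn k (depth v) then coord v i else 0.
Proof.
apply: mkvertexP; first by apply: leq_trans (geq_minr _ _) (depth_leh v).
by move=> i lt_i; apply: coord_lt; apply: leq_trans lt_i (geq_minr _ _).
Qed.

Lemma ancestor_depth (v : V) : ancestor v (depth v) = v.
Proof.
have [dep eq_coord] := ancestorP v (depth v); rewrite minnn in dep eq_coord.
by apply: vertex_ext => // i; rewrite dep => lt_i; rewrite eq_coord lt_i.
Qed.

Lemma ancestor_ancestor (v : V) k k' : k' <= k -> ancestor (ancestor v k) k' = ancestor v k'.
Proof.
move=> le_k; have [dep eq_coord] := ancestorP v k.
have [dep' eq_coord'] := ancestorP (ancestor v k) k'.
have [dep2 eq_coord2] := ancestorP v k'.
have eq_min : minn k' (depth (ancestor v k)) = minn k' (depth v) by rewrite dep; lia.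
apply: vertex_ext; first by rewrite dep' eq_min dep2.
move=> i; rewrite dep' eq_min => lt_i; rewrite eq_coord' eq_min lt_i eq_coord eq_coord2 lt_i.
by have -> : i < minn k (depth v) by lia.
Qed.

Definition child (w : V) (j : nat) : V :=
  mkvertex (depth w).+1 (fun i => if i == depth w then j else coord w i).

Lemma childP w j : depth w < h -> j < branching (depth w) ->
  depth (child w j) = (depth w).+1 /\
  forall i, coord (child w j) i =
    if i < (depth w).+1 then (if i == depth w then j else coord w i) else 0.
Proof.
move=> lt_wh lt_j; apply: mkvertexP => // i lt_i.
by case: eqP => [->//|ne]; apply: coord_lt; rewrite ltn_neqAle -ltnS lt_i andbT; apply/eqP.
Qed.

Lemma parentP (u v : V) : reflect
  (depth v = (depth u).+1 /\ forall i, i < depth u -> coord u i = coord v i)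
  (parent u v).
Proof.
apply: (iffP andP) => [[/eqP dep /forallP eq_path]|[dep eq_coord]]; split => //.
- move=> i lt_i; have lt_ih : i < h.
    by apply: leq_trans lt_i (leq_trans (leqnSn _) _); rewrite -dep depth_leh.
  have := eq_path (Ordinal lt_ih); rewrite /= lt_i => /eqP eq_ui.
  by rewrite -[i]/(nat_of_ord (Ordinal lt_ih)) !coordE eq_ui.
- exact/eqP.
- apply/forallP => i; apply/implyP => lt_i.
  by apply/eqP/val_inj; rewrite /= -!coordE eq_coord.
Qed.

Lemma parent_depth (u v : V) : parent u v -> depth v = (depth u).+1.
Proof. by case/parentP. Qed.

Lemma parent_ancestor (u v : V) : parent u v = (0 < depth v) && (u == ancestor v (depth v).-1).
Proof.
have [dep eq_coord] := ancestorP v (depth v).-1.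
have eq_min : minn (depth v).-1 (depth v) = (depth v).-1 by lia.
rewrite eq_min in dep eq_coord.
apply/idP/andP => [/parentP [dep_v eq_coord_v]|[v_gt0 /eqP ->]].
  split; first by rewrite dep_v.
  apply/eqP/vertex_ext; first by rewrite dep dep_v.
  by move=> i lt_i; rewrite eq_coord dep_v /= lt_i eq_coord_v.
apply/parentP; rewrite dep prednK //; split=> // i lt_i.
by rewrite eq_coord lt_i.
Qed.

Lemma child_parent w j : depth w < h -> j < branching (depth w) -> parent w (child w j).
Proof.
move=> lt_wh lt_j; have [dep eq_coord] := childP lt_wh lt_j.
apply/parentP; split => // i lt_i; rewrite eq_coord ltnS ltnW // ifN //.
by rewrite neq_ltn lt_i.
Qed.

Lemma coord_child_last w j : depth w < h -> j < branching (depth w) ->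
  coord (child w j) (depth w) = j.
Proof. by move=> lt_wh lt_j; have [_ ->] := childP lt_wh lt_j; rewrite ltnSn eqxx. Qed.

Lemma ancestor_child w j : depth w < h -> j < branching (depth w) ->
  ancestor (child w j) (depth w) = w.
Proof.
move=> lt_wh lt_j; have := child_parent lt_wh lt_j.
rewrite parent_ancestor => /andP [_ /eqP eq_w].
by have [dep _] := childP lt_wh lt_j; rewrite {3}eq_w dep.
Qed.

Lemma sum_parents (F : V -> int) (w : V) :
  (\sum_(v | parent v w) F v)%R = if 0 < depth w then F (ancestor w (depth w).-1) else 0%R.
Proof.
case: ifP => w_gt0; last by apply: big_pred0 => v; rewrite parent_ancestor w_gt0.
by apply: big_pred1 => v; rewrite parent_ancestor w_gt0.
Qed.

Lemma sum_children (F : V -> int) (w : V) :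
  (\sum_(v | parent w v) F v)%R =
  if depth w < h then (\sum_(j < d | (j < branching (depth w))%N) F (child w j))%R else 0%R.
Proof.
case: ltnP => [lt_wh|le_hw]; last first.
  apply: big_pred0 => v; apply/negP => /parent_depth dep.
  by have := depth_leh v; rewrite dep ltnNge le_hw.
rewrite (reindex_onto (fun j : 'I_d => child w j) (fun v => inord (coord v (depth w)))).
  apply: eq_bigl => j; apply/andP/idP => [[par_wj /eqP <-]|lt_j].
    have lt_c : coord (child w j) (depth w) < branching (depth w).
      by apply: coord_lt; rewrite (parent_depth par_wj).
    by rewrite inordK // (leq_trans lt_c (branching_le _)).
  split; first exact: child_parent.
  have [_ eq_coord] := childP lt_wh lt_j.
  by apply/eqP/val_inj; rewrite /= eq_coord ltnSn eqxx inordK.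
move=> v /parentP [dep eq_coord].
have lt_c : coord v (depth w) < branching (depth w) by apply: coord_lt; rewrite dep.
have lt_cd := leq_trans lt_c (branching_le _).
have lt_j : (inord (coord v (depth w)) : 'I_d) < branching (depth w) by rewrite inordK.
have [dep' eq_coord'] := childP lt_wh lt_j.
apply: vertex_ext; first by rewrite dep' dep.
move=> i; rewrite dep' => lt_i; rewrite eq_coord' lt_i; case: eqP => [->|ne].
  by rewrite inordK.
by apply: eq_coord; rewrite ltn_neqAle -ltnS lt_i andbT; apply/eqP.
Qed.

Definition Delta_comb (c : V -> int) (w : V) : int := (\sum_v c v * Delta_row v w)%R.

Lemma Delta_combE c w : Delta_comb c w =
  (d%:Z * c w - (\sum_(v | parent v w) c v + \sum_(v | parent w v) c v))%R.
Proof.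
have eq_row v : Delta_row v w =
    ((d * (v == w))%:Z - (parent v w : nat)%:Z - (parent w v : nat)%:Z)%R.
  rewrite ffunE /tadj -addrA -opprD -PoszD; congr (_ - Posz _)%R.
  case par_vw: (parent v w); case par_wv: (parent w v) => //=.
  by have := parent_depth par_vw; rewrite (parent_depth par_wv); lia.
rewrite /Delta_comb; under eq_bigr do rewrite eq_row !mulrBr.
rewrite !sumrB (bigD1 w) //= eqxx muln1 big1 ?addr0; last first.
  by move=> v /negbTE ->; rewrite muln0 mulr0.
rewrite opprD addrA mulrC !(big_mkcond (fun v => parent _ _)).
by congr (_ - _ - _)%R; apply: eq_bigr => v _; case: ifP; rewrite ?mulr1 ?mulr0.
Qed.

Lemma leq_lex_code a b a' b' n : b < n -> b' < n ->
  (a * n + b <= a' * n + b') = (a < a') || (a == a') && (b <= b').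
Proof.
move=> lt_b lt_b'; case: (ltngtP a a') => [lt_a|lt_a|<-] /=; last by rewrite leq_add2l.
  by apply/idP; nia.
by apply/negbTE; rewrite -ltnNge; nia.
Qed.

Lemma norm_sum_children_le (y : V -> int) w K :
  (forall j, depth w < h -> j < branching (depth w) -> absz (y (child w j)) <= K) ->
  (`|\sum_(v | parent w v) y v| <= ((depth w < h) * (branching (depth w) * K))%N%:Z)%R.
Proof.
move=> le_K; rewrite sum_children; case: ifP => lt_wh; last by rewrite normr0.
rewrite mul1n (big_ord_narrow (branching_le _)).
apply: le_trans (ler_norm_sum _ _ _) _.
apply: le_trans (ler_sum _ (G := fun _ => Posz K) _) _ => [j _|].
  by rewrite /= -abszE lez_nat le_K.
by rewrite sumr_const card_ord -mulr_natl natz PoszM.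
Qed.

Lemma Delta_comb_eq0 (y : V -> int) :
  (forall w, Delta_comb y w = 0%R) -> forall v, y v = 0%R.
Proof.
move=> y_ker.
(* w maximises |y| and, among those maxima, the depth; so its children have smaller |y|. *)
pose K v := absz (y v) * h.+1 + depth v.
have [w _ w_max] := @arg_maxnP _ root predT K isT.
set M := absz (y w).
have le_M v : absz (y v) <= M.
  have := w_max v isT; rewrite /K /= leq_lex_code ?ltnS ?depth_leh //.
  by case/orP => [/ltnW|/andP[/eqP-> _]].
have lt_M j : depth w < h -> j < branching (depth w) -> absz (y (child w j)) < M.
  move=> lt_wh lt_j; have [dep _] := childP lt_wh lt_j.
  have := w_max (child w j) isT; rewrite /K /= dep leq_lex_code ?ltnS ?depth_leh //.
  by rewrite ltnn andbF orbF.
suff M0 : M = 0 by move=> v; apply/eqP; rewrite -absz_eq0 -leqn0 -M0 le_M.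
have le_up : (`|\sum_(v | parent v w) y v| <= ((0 < depth w) * M)%N%:Z)%R.
  rewrite sum_parents; case: ifP => _; last by rewrite normr0.
  by rewrite mul1n -abszE lez_nat le_M.
have le_down : (`|\sum_(v | parent w v) y v| <=
    ((depth w < h) * (branching (depth w) * M.-1))%N%:Z)%R.
  apply: norm_sum_children_le => j lt_wh lt_j.
  by rewrite -ltnS (ltn_predK (lt_M _ lt_wh lt_j)) lt_M.
have : d * M <= (0 < depth w) * M + (depth w < h) * (branching (depth w) * M.-1).
  have := y_ker w; rewrite Delta_combE => /eqP; rewrite subr_eq0 => /eqP eq_yw.
  have dM : Posz (d * M) =
      `|(\sum_(v | parent v w) y v + \sum_(v | parent w v) y v)%R|%R.
    by rewrite -eq_yw normrM PoszM /M abszE.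
  rewrite -lez_nat PoszD dM.
  exact: le_trans (ler_normD _ _) (lerD le_up le_down).
(* d M <= d (M - 1) at the root, M + (d - 1) (M - 1) inside, M at a leaf. *)
have := depth_leh w; rewrite /branching.
by case: (posnP (depth w)) => [->|w_gt0]; case: ltnP => //=; nia.
Qed.

Lemma in_lattice_Delta_comb (c : V -> int) : in_lattice [ffun w => Delta_comb c w].
Proof.
exists [ffun v => c v]; apply/ffunP => w; rewrite !ffunE.
by apply: eq_bigr => v _; rewrite ffunE.
Qed.

Lemma Delta_combZ (x : int) (c : V -> int) w :
  Delta_comb (fun v => x * c v)%R w = (x * Delta_comb c w)%R.
Proof. by rewrite /Delta_comb mulr_sumr; apply: eq_bigr => v _; rewrite mulrA. Qed.

Lemma Delta_comb_sum (I : finType) (f : I -> int) (c : I -> V -> int) w :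
  Delta_comb (fun v => \sum_i f i * c i v)%R w = (\sum_i f i * Delta_comb (c i) w)%R.
Proof.
rewrite /Delta_comb; under eq_bigr do rewrite mulr_suml.
rewrite exchange_big; apply: eq_bigr => i _; rewrite mulr_sumr.
by apply: eq_bigr => v _; rewrite mulrA.
Qed.

Lemma Delta_combB (f g : V -> int) w :
  Delta_comb (fun v => f v - g v)%R w = (Delta_comb f w - Delta_comb g w)%R.
Proof. by rewrite /Delta_comb -sumrB; apply: eq_bigr => v _; rewrite mulrBl. Qed.

Definition desc (u v : V) : bool := (depth u <= depth v) && (ancestor v (depth u) == u).

Lemma desc_refl (u : V) : desc u u.
Proof. by rewrite /desc leqnn ancestor_depth eqxx. Qed.

Lemma desc_depth (u v : V) : desc u v -> depth u <= depth v.
Proof. by case/andP. Qed.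

Lemma desc_depth_eq (u v : V) : desc u v -> depth v <= depth u -> v = u.
Proof.
case/andP => le_uv /eqP anc_v le_vu.
by rewrite -anc_v (_ : depth u = depth v) ?ancestor_depth //; apply/eqP; rewrite eqn_leq le_uv.
Qed.

Lemma desc_parent (u w : V) : 0 < depth w ->
  desc u (ancestor w (depth w).-1) = desc u w && (w != u).
Proof.
move=> w_gt0; have [dep _] := ancestorP w (depth w).-1.
rewrite (_ : minn _ _ = (depth w).-1) in dep; last by lia.
rewrite /desc dep; case: (ltngtP (depth u) (depth w)) => cmp.
- rewrite ancestor_ancestor; last by lia.
  rewrite (_ : depth u <= (depth w).-1); last by lia.
  case: eqP => //= <-; apply/esym/eqP => eq_w.
  by have [] := ancestorP w (depth u); rewrite -eq_w; lia.
- by rewrite (_ : depth u <= (depth w).-1 = false) //; lia.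
- by rewrite (_ : depth u <= (depth w).-1 = false) /= ?cmp ?ancestor_depth ?andbN //; lia.
Qed.

Lemma desc_child (u w v : V) : parent w v -> desc u v = desc u w || (v == u).
Proof.
rewrite parent_ancestor => /andP [v_gt0 /eqP ->]; rewrite desc_parent //.
by case: eqP => [->|_]; rewrite ?desc_refl ?andbT ?orbT ?orbF.
Qed.

Definition b2z (b : bool) : int := Posz b.

Definition even_desc (u v : V) : int := b2z (desc u v && ~~ odd (depth v - depth u)).
Definition odd_desc (u v : V) : int := b2z (desc u v && odd (depth v - depth u)).

Lemma sum_parents_even_desc u w : (\sum_(v | parent v w) even_desc u v)%R = odd_desc u w.
Proof.
rewrite sum_parents /odd_desc /even_desc; case: posnP => w_gt0.
  by case des: (desc u w) => //=; move: (desc_depth des); rewrite w_gt0 leqn0 => /eqP ->.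
rewrite desc_parent //; have [-> _] := ancestorP w (depth w).-1.
rewrite (_ : minn _ _ = (depth w).-1); last by lia.
case des: (desc u w) => //=; case: eqP => [->|ne] /=; first by rewrite subnn.
have lt_uw : depth u < depth w by rewrite ltnNge; apply/negP => /(desc_depth_eq des)/ne.
by rewrite (_ : depth w - depth u = ((depth w).-1 - depth u).+1) ?oddS //; lia.
Qed.

Lemma sum_children_const (w : V) (x : int) :
  (\sum_(v | parent w v) x)%R = ((if (depth w < h)%N then branching (depth w) else 0)%:R * x)%R.
Proof.
rewrite sum_children; case: ifP => _; last by rewrite mul0r.
by rewrite (big_ord_narrow (branching_le _)) sumr_const card_ord mulr_natl.
Qed.

Lemma sum_children_even_desc u w : ~~ odd (h - depth u) ->
  (\sum_(v | parent w v) even_desc u v = d.-1%:R * odd_desc u w + b2z (parent w u))%R.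
Proof.
move=> even_hu; rewrite /odd_desc; case des: (desc u w) => /=.
  have -> : parent w u = false.
    by apply/negP => /parent_depth; have := desc_depth des; lia.
  under eq_bigr => v par_wv do rewrite /even_desc (desc_child _ par_wv) des (parent_depth par_wv).
  rewrite /= sum_children_const addr0 subSn ?desc_depth // oddS negbK.
  case odd_wu: (odd (depth w - depth u)); last by rewrite !mulr0.
  rewrite ifT; last first.
    rewrite ltn_neqAle depth_leh andbT; apply: contraNneq even_hu => eq_wh.
    by move: odd_wu; rewrite eq_wh.
  rewrite /branching ifN //; apply: contraTneq odd_wu => ->.
  by rewrite sub0n.
rewrite mulr0 add0r (eq_bigr (fun v => b2z (v == u))); last first.
  move=> v par_wv; rewrite /even_desc (desc_child _ par_wv) des /=.
  by case: eqP => // ->; rewrite subnn.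
case par_wu: (parent w u).
  by rewrite (bigD1 u) //= eqxx big1 ?addr0 // => v /andP [_ /negbTE ->].
by rewrite big1 // => v par_wv; case: eqP par_wv => // ->; rewrite par_wu.
Qed.

Lemma Delta_even_desc u w : ~~ odd (h - depth u) ->
  Delta_comb (even_desc u) w = (d%:Z * (even_desc u w - odd_desc u w) - b2z (parent w u))%R.
Proof.
move=> even_hu; rewrite Delta_combE sum_parents_even_desc sum_children_even_desc //.
rewrite /b2z; lia.
Qed.

Definition first_sibling (u : V) : V := child (ancestor u (depth u).-1) 0.

Lemma first_siblingP u : 0 < depth u ->
  [/\ depth (first_sibling u) = depth u, coord (first_sibling u) (depth u).-1 = 0
    & forall w, parent w (first_sibling u) = parent w u].
Proof.
move=> u_gt0; set p := ancestor u (depth u).-1.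
have dep_p : depth p = (depth u).-1 by have [-> _] := ancestorP u (depth u).-1; lia.
have lt_ph : depth p < h by rewrite dep_p; have := depth_leh u; lia.
have [dep eq_coord] := childP lt_ph (branching_gt0 _).
have dep_s : depth (first_sibling u) = depth u by rewrite /first_sibling dep dep_p prednK.
have anc_s : ancestor (first_sibling u) (depth u).-1 = p.
  by rewrite /first_sibling -/p -dep_p (ancestor_child lt_ph (branching_gt0 _)).
split => //; first by rewrite /first_sibling -/p eq_coord dep_p ltnSn eqxx.
by move=> w; rewrite !parent_ancestor dep_s anc_s.
Qed.

Definition alt_desc (u v : V) : int := (even_desc u v - odd_desc u v)%R.

Definition gen_coef (u : V) : V -> int :=
  if 0 < depth u then (fun v => even_desc u v - even_desc (first_sibling u) v)%R else even_desc u.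

Definition gen (u : V) : V -> int :=
  if 0 < depth u then (fun v => alt_desc u v - alt_desc (first_sibling u) v)%R else alt_desc u.

Lemma Delta_gen_coef u w : ~~ odd (h - depth u) ->
  Delta_comb (gen_coef u) w = (d%:Z * gen u w)%R.
Proof.
move=> even_hu; rewrite /gen_coef /gen /alt_desc; case: posnP => [u0|u_gt0].
  rewrite Delta_even_desc // (_ : parent w u = false) ?subr0 //.
  by apply/negP => /parent_depth; rewrite u0.
have [dep_s _ par_s] := first_siblingP u_gt0.
rewrite Delta_combB !Delta_even_desc ?dep_s // par_s; lia.
Qed.

Definition basic (u : V) : bool :=
  ~~ odd (h - depth u) && ((depth u == 0) || (coord u (depth u).-1 != 0)).

Lemma first_sibling_neq_basic u v : basic u -> 0 < depth v -> first_sibling v != u.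
Proof.
case/andP => _ not_first v_gt0; apply: contraTneq not_first => <-.
by have [-> -> _] := first_siblingP v_gt0; rewrite orbF -lt0n.
Qed.

Lemma even_desc_eq0 u v : depth u <= depth v -> v != u -> even_desc v u = 0%R.
Proof.
move=> le_uv ne_vu; rewrite /even_desc; case des: (desc v u) => //=.
by move: ne_vu; rewrite (desc_depth_eq des le_uv) eqxx.
Qed.

Lemma gen_coef_diag u : basic u -> gen_coef u u = 1%R.
Proof.
have even_uu : even_desc u u = 1%R by rewrite /even_desc desc_refl subnn.
move=> basic_u; rewrite /gen_coef; case: posnP => [_|u_gt0] /=; first exact: even_uu.
have [dep_s _ _] := first_siblingP u_gt0.
by rewrite even_uu (even_desc_eq0 (eq_leq (esym dep_s))) ?subr0 ?first_sibling_neq_basic.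
Qed.

Lemma gen_coef_triangular u v : basic u -> depth u <= depth v -> v != u ->
  gen_coef v u = 0%R.
Proof.
move=> basic_u le_uv ne_vu; rewrite /gen_coef.
case: posnP => [_|v_gt0] /=; first exact: even_desc_eq0.
have [dep_s _ _] := first_siblingP v_gt0.
by rewrite !even_desc_eq0 ?subrr ?dep_s ?first_sibling_neq_basic.
Qed.

Lemma sum_level_succ (g : V -> int) k : k < h ->
  (\sum_(v | depth v == k.+1) g v =
   \sum_(w | depth w == k) \sum_(j < d | (j < branching k)%N) g (child w j))%R.
Proof.
move=> lt_kh.
rewrite (eq_bigr (fun v => \sum_(w | parent w v) g v)%R); last first.
  by move=> v /eqP dep; rewrite sum_parents dep.
rewrite (exchange_big_dep (fun w => depth w == k)) /=; last first.
  by move=> v w /eqP dep /parent_depth; rewrite dep => -[->].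
apply: eq_bigr => w /eqP dep_w; transitivity (\sum_(v | parent w v) g v)%R.
  apply: eq_bigl => v; apply/andP/idP => [[] //|par_wv]; split => //.
  by rewrite (parent_depth par_wv) dep_w.
by rewrite sum_children dep_w lt_kh.
Qed.

Definition level_size (k : nat) : int := (\sum_(v : V | depth v == k) 1)%R.

Lemma level_size_closed k : k <= h ->
  level_size k = if k is k'.+1 then (d%:R * d.-1%:R ^+ k')%R else 1%R.
Proof.
elim: k => [_|k IH lt_kh].
  rewrite /level_size (big_pred1 root) // => v.
  by apply/eqP/eqP => [/depth0_root|->].
rewrite /level_size sum_level_succ //.
rewrite (eq_bigr (fun _ => 1 * (branching k)%:R)%R); last first.
  by move=> w _; rewrite mul1r (big_ord_narrow (branching_le _)) sumr_const card_ord.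
rewrite -mulr_suml; have := IH (ltnW lt_kh); rewrite /level_size => -> {IH lt_kh}.
by case: k => [|k]; rewrite /branching /= ?mul1r ?expr0 ?mulr1 // -mulrA -exprSr.
Qed.

Definition basic_level_size (k : nat) : int :=
  match k with 0 => 1 | 1 => d.-1%:R | k.+2 => d%:R * d.-1%:R ^+ k * d.-2%:R end%R.

Lemma sum_level_basic k : k <= h ->
  (\sum_(v : V | depth v == k) b2z (basic v))%R = (b2z (~~ odd (h - k)) * basic_level_size k)%R.
Proof.
case: k => [|k] le_kh.
  rewrite (eq_bigr (fun _ => b2z (~~ odd (h - 0)) * 1))%R; last first.
    by move=> v /eqP v0; rewrite /basic v0 eqxx andbT mulr1.
  by rewrite -mulr_sumr; have := level_size_closed (leq0n h); rewrite /level_size => ->.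
rewrite (eq_bigr (fun v => b2z (~~ odd (h - k.+1)) * b2z (coord v k != 0))%R); last first.
  by move=> v /eqP dep; rewrite /basic dep /=; case: (~~ odd _); rewrite ?mul1r ?mul0r.
rewrite -mulr_sumr sum_level_succ //; congr (_ * _)%R.
have count_nonzero b : 0 < b -> b <= d ->
    (\sum_(j < d | (j < b)%N) b2z (j != 0 :> nat))%R = (b.-1%:R)%R.
  case: b => // b _ le_bd; rewrite (big_ord_narrow le_bd).
  by rewrite big_ord_recl add0r (eq_bigr (fun _ => 1%R)) ?sumr_const ?card_ord.
rewrite (eq_bigr (fun _ => 1 * (branching k).-1%:R)%R); last first.
  move=> w /eqP dep_w; rewrite mul1r -count_nonzero ?branching_gt0 ?branching_le //.
  by apply: eq_bigr => j lt_j; rewrite -dep_w coord_child_last // dep_w.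
rewrite -mulr_suml; have := level_size_closed (ltnW le_kh); rewrite /level_size => ->.
by case: k {le_kh} => [|k]; rewrite /branching /= ?mul1r.
Qed.

Lemma sum_basic_level_size n :
  (\sum_(k < n.+1) b2z (~~ odd (n - k)) * basic_level_size k)%R = (d.-1%:R ^+ n)%R.
Proof.
pose S n := (\sum_(k < n.+1) b2z (~~ odd (n - k)) * basic_level_size k)%R.
suff S_pair : S n = (d.-1%:R ^+ n)%R /\ S n.+1 = (d.-1%:R ^+ n.+1)%R by case: S_pair.
elim: n => [|n [IH IH1]]; rewrite /S.
  by split; rewrite !big_ord_recr big_ord0 /= ?expr0 ?expr1 /b2z /=; lia.
split=> //; rewrite 2!big_ord_recr /= subnn subSnn /= mul0r addr0 mul1r.
rewrite (eq_bigr (fun k : 'I_n.+1 => b2z (~~ odd (n - k)) * basic_level_size k)%R); last first.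
  by move=> k _; rewrite (_ : n.+2 - k = (n - k).+2) /= ?negbK //; have := ltn_ord k; lia.
move: IH; rewrite /S => ->; rewrite !exprS; move: (_ ^+ n)%R => X; lia.
Qed.

Lemma card_basic : #|[pred u : V | basic u]| = (d - 1) ^ h.
Proof.
apply/eqP; rewrite -(eqr_nat int) natrX subn1 -sumr_const big_mkcond /=.
rewrite (partition_big (fun v : V => (val v).1) predT) //= -sum_basic_level_size.
apply/eqP; apply: eq_bigr => k _; rewrite -sum_level_basic; last by rewrite -ltnS.
by apply: eq_big => [v|v _]; [rewrite -val_eqE | rewrite inE; case: basic].
Qed.

Section Unitriangular.

Variables (N : nat) (vert : 'I_N -> V) (coef gen : 'I_N -> V -> int).
Hypothesis Delta_coef : forall i w, Delta_comb (coef i) w = (d%:Z * gen i w)%R.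
Hypothesis coef_diag : forall i, coef i (vert i) = 1%R.
Hypothesis coef_triangular :
  forall i j, i != j -> depth (vert j) <= depth (vert i) -> coef i (vert j) = 0%R.

Definition gen_sum (a : {ffun 'I_N -> 'Z_d}) : ZV d h :=
  [ffun w => \sum_i (a i)%:Z * gen i w]%R.

Lemma Delta_comb_coef (f : 'I_N -> int) w :
  Delta_comb (fun v => \sum_i f i * coef i v)%R w = (d%:Z * \sum_i f i * gen i w)%R.
Proof.
rewrite Delta_comb_sum mulr_sumr; apply: eq_bigr => i _.
by rewrite Delta_coef mulrCA.
Qed.

Lemma gen_sum_additive a b : in_lattice (gen_sum (a + b) - gen_sum a - gen_sum b)%R.
Proof.
pose q i := ((a i + b i) %/ d)%N.
suff -> : (gen_sum (a + b) - gen_sum a - gen_sum b)%R =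
    [ffun w => Delta_comb (fun v => \sum_i - (q i)%:Z * coef i v)%R w].
  exact: in_lattice_Delta_comb.
apply/ffunP => w; rewrite !ffunE Delta_comb_coef mulr_sumr -!sumrB.
apply: eq_bigr => i _; rewrite !ffunE -!mulrBl mulrA; congr (_ * _)%R.
have -> : nat_of_ord (a i + b i)%R = ((a i : nat) + b i) %% d by [].
have := divn_eq (a i + b i) d; rewrite -/(q i).
move: (nat_of_ord (a i)) (nat_of_ord (b i)) (q i) ((_ + _) %% d)%N => x y m r.
lia.
Qed.

Lemma gen_sum_kernel a : in_lattice (gen_sum a) ->
  forall v, (d%:Z %| (\sum_i (a i)%:Z * coef i v)%R)%Z.
Proof.
case=> c eq_c v.
suff -> : (\sum_i (a i)%:Z * coef i v = d%:Z * c v)%R by apply: dvdz_mulr.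
apply/eqP; rewrite -subr_eq0; apply/eqP; move: v; apply: Delta_comb_eq0 => w.
rewrite (Delta_combB (fun v => \sum_i (a i)%:Z * coef i v)%R) Delta_comb_coef.
have eq_w : (\sum_i (a i)%:Z * gen i w)%R = Delta_comb c w.
  by have := congr1 (fun f : ZV d h => f w) eq_c; rewrite !ffunE.
by rewrite Delta_combZ eq_w subrr.
Qed.

Lemma coef_unitriangular (a : 'I_N -> int) :
  (forall v, (d%:Z %| (\sum_i a i * coef i v)%R)%Z) -> forall i, (d%:Z %| a i)%Z.
Proof.
move=> dvd_sum.
suff dvd_depth n i : depth (vert i) < n -> (d%:Z %| a i)%Z.
  by move=> i; apply: (dvd_depth _ i (ltnSn _)).
elim: n i => // n IH i lt_in.
have dvd_rest : (d%:Z %| (\sum_(j | j != i) a j * coef j (vert i))%R)%Z.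
  apply: rpred_sum => j ne_ji.
  case: (ltnP (depth (vert j)) (depth (vert i))) => [lt_ji|le_ij].
    by rewrite dvdz_mulr // IH //; apply: leq_trans lt_ji _.
  by rewrite coef_triangular ?mulr0 ?dvdz0.
by have := dvd_sum (vert i); rewrite (bigD1 i) //= coef_diag mulr1 rpredDr.
Qed.

Lemma embeds_unitriangular : embeds_in_G {ffun 'I_N -> 'Z_d} d h.
Proof.
exists gen_sum; split; first exact: gen_sum_additive.
move=> a /gen_sum_kernel/coef_unitriangular dvd_a; apply/ffunP => i.
apply: val_inj; have := dvd_a i; rewrite ffunE dvdzE /= /dvdn modn_small ?ltn_ord //.
by move/eqP.
Qed.

End Unitriangular.

Theorem embeds_basic : embeds_in_G {ffun 'I_((d - 1) ^ h) -> 'Z_d} d h.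
Proof.
pose vert i := enum_val (cast_ord (esym card_basic) i).
have basic_vert i : basic (vert i) by have := enum_valP (cast_ord (esym card_basic) i).
apply: (@embeds_unitriangular _ vert (fun i => gen_coef (vert i)) (fun i => gen (vert i))).
- by move=> i w; apply: Delta_gen_coef; case/andP: (basic_vert i).
- by move=> i; apply: gen_coef_diag.
- move=> i j ne_ij le_ji; apply: gen_coef_triangular => //.
  by apply: contra ne_ij => /eqP /enum_val_inj /cast_ord_inj ->.
Qed.

End Tree.

Theorem lemma6p6 (d h : nat) (hd : (3 <= d)%N) (hh : (1 <= h)%N) :
  embeds_in_G {ffun 'I_((d - 1) ^ h) -> 'Z_d} d h.
Proof.
case: d hd => [|[|[|dd]]] // _; case: h hh => // hh _.
exact: embeds_basic.
Qed.
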